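(* Let $K$ be an algebraically closed field and let $\omega = P\,dx + Q\,dy$ be a differential form with $P,Q \in K[x,y]$. If $\omega$ has a center at $a \in K^2$, then $d\omega(a) = 0$.
   Context: A differential form $\omega = P\,dx + Q\,dy$ has a zero at $a=(a_x,a_y)$ if $P(a)=Q(a)=0$. It has a center at $a$ if it has a zero at $a$ and there exist formal power series $\mu, F \in K[[x-a_x,\,y-a_y]]$ with $\mu(a) \neq 0$ and $dF = \mu\,\omega$. Here $d\omega = (Q_x - P_y)\,dx\wedge dy$ is the exterior derivative, and $d\omega(a)$ is its value at $a$. *)

(* Bivariate polynomials are {poly {poly K}}:
   the OUTER variable is y, the INNER (coefficient) variable is x,
   so P = \sum_j (\sum_i c_ij x^i) y^j. *)
From HB Require Import structures.
From mathcomp Require Import all_boot all_order all_algebra.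
Set Implicit Arguments. Unset Strict Implicit. Unset Printing Implicit Defensive.
Import Order.TTheory GRing.Theory Num.Theory.
Local Open Scope ring_scope.

Section Defs.
Variable K : fieldType.

Definition eval2 (P : {poly {poly K}}) (ax ay : K) : K := (P.[ay%:P]).[ax].

Definition dX (P : {poly {poly K}}) : {poly {poly K}} := map_poly (@deriv K) P.
Definition dY (P : {poly {poly K}}) : {poly {poly K}} := deriv P.

(* formal power series in two variables u, v: coefficient of u^i v^j *)
Definition pser := nat -> nat -> K.

Definition ps_mul (f g : pser) : pser := fun i j =>
  \sum_(k < i.+1) \sum_(l < j.+1) f k l * g (i - k)%N (j - l)%N.

Definition ps_du (f : pser) : pser := fun i j => f i.+1 j *+ i.+1.
Definition ps_dv (f : pser) : pser := fun i j => f i j.+1 *+ j.+1.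

Definition shift2 (P : {poly {poly K}}) (ax ay : K) : {poly {poly K}} :=
  (map_poly (fun p : {poly K} => p \Po ('X + ax%:P)) P) \Po ('X + (ay%:P)%:P).

(* P viewed as an element of K[[x - ax, y - ay]] *)
Definition ps_of_poly (P : {poly {poly K}}) (ax ay : K) : pser :=
  fun i j => ((shift2 P ax ay)`_j)`_i.

Definition has_zero (P Q : {poly {poly K}}) (ax ay : K) : Prop :=
  eval2 P ax ay = 0 /\ eval2 Q ax ay = 0.

(* omega has a center at a: zero at a, and mu, F in K[[x-ax,y-ay]] with
   mu(a) <> 0 and dF = mu * omega, i.e. F_x = mu P and F_y = mu Q. *)
Definition has_center (P Q : {poly {poly K}}) (ax ay : K) : Prop :=
  has_zero P Q ax ay /\
  exists mu F : pser, mu 0%N 0%N != 0 /\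
    ps_du F = ps_mul mu (ps_of_poly P ax ay) /\
    ps_dv F = ps_mul mu (ps_of_poly Q ax ay).

Definition domega_at (P Q : {poly {poly K}}) (ax ay : K) : K :=
  eval2 (dX Q - dY P) ax ay.
End Defs.

(* A center gives F with F_u = mu P and F_v = mu Q in local coordinates
   u = x - ax, v = y - ay.  Comparing the coefficient of u v in F_uv = F_vu,
   and using P(a) = Q(a) = 0, leaves mu(a) P_y(a) = mu(a) Q_x(a); since
   mu(a) <> 0, this is d omega(a) = 0. *)
From HB Require Import structures.
From mathcomp Require Import all_boot all_order all_algebra.
Set Implicit Arguments. Unset Strict Implicit. Unset Printing Implicit Defensive.
Import GRing.Theory.
Local Open Scope ring_scope.

Section PolyShift.
Variable R : comNzRingType.

Lemma coef0_comp_XaddC (p : {poly R}) c : (p \Po ('X + c%:P))`_0 = p.[c].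
Proof. by rewrite -horner_coef0 horner_comp hornerD hornerX hornerC add0r. Qed.

Lemma coef1_comp_XaddC (p : {poly R}) c : (p \Po ('X + c%:P))`_1 = p^`().[c].
Proof.
rewrite -[LHS]mulr1n -coef_deriv -horner_coef0 deriv_comp derivD derivX derivC addr0 mulr1.
by rewrite horner_comp hornerD hornerX hornerC add0r.
Qed.

Lemma horner_map_deriv (P : {poly {poly R}}) c :
  (map_poly (@deriv R) P).[c%:P] = (P.[c%:P])^`().
Proof.
elim/poly_ind: P => [|P d IH]; first by rewrite map_poly0 !horner0 deriv0.
have -> : map_poly (@deriv R) (P * 'X + d%:P) =
          map_poly (@deriv R) P * 'X + (d^`())%:P.
  apply/polyP => i; rewrite coef_map_id0 ?deriv0 // !coefD !coefMX !coefC.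
  case: i => [|i] /=; first by rewrite derivD derivC add0r.
  by rewrite derivD deriv0 !addr0 coef_map_id0 ?deriv0.
by rewrite !hornerMXaddC IH derivD derivM derivC mulr0 addr0.
Qed.

End PolyShift.

Section LowOrderCoefficients.
Variable K : fieldType.
Implicit Types (f g F : pser K) (P : {poly {poly K}}) (ax ay : K).

Lemma ps_mul01 f g : ps_mul f g 0 1 = f 0%N 0%N * g 0%N 1%N + f 0%N 1%N * g 0%N 0%N.
Proof. by rewrite /ps_mul !big_ord_recr !big_ord0 /= !add0r !subnn !subn0. Qed.

Lemma ps_mul10 f g : ps_mul f g 1 0 = f 0%N 0%N * g 1%N 0%N + f 1%N 0%N * g 0%N 0%N.
Proof. by rewrite /ps_mul !big_ord_recr !big_ord0 /= !add0r !subnn !subn0. Qed.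

Lemma shift2_coef0 P ax ay : (shift2 P ax ay)`_0 = P.[ay%:P] \Po ('X + ax%:P).
Proof.
rewrite coef0_comp_XaddC -[X in _.[X]](comp_polyC ay ('X + ax%:P)).
exact: (horner_map (comp_poly ('X + ax%:P))).
Qed.

Lemma shift2_coef1 P ax ay : (shift2 P ax ay)`_1 = (dY P).[ay%:P] \Po ('X + ax%:P).
Proof.
rewrite coef1_comp_XaddC deriv_map -[X in _.[X]](comp_polyC ay ('X + ax%:P)).
exact: (horner_map (comp_poly ('X + ax%:P))).
Qed.

Lemma ps_of_poly00 P ax ay : ps_of_poly P ax ay 0 0 = eval2 P ax ay.
Proof. by rewrite /ps_of_poly shift2_coef0 coef0_comp_XaddC. Qed.

Lemma ps_of_poly10 P ax ay : ps_of_poly P ax ay 1 0 = eval2 (dX P) ax ay.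
Proof. by rewrite /ps_of_poly shift2_coef0 coef1_comp_XaddC /eval2 horner_map_deriv. Qed.

Lemma ps_of_poly01 P ax ay : ps_of_poly P ax ay 0 1 = eval2 (dY P) ax ay.
Proof. by rewrite /ps_of_poly shift2_coef1 coef0_comp_XaddC. Qed.

Lemma ps_du_dvC F i j : ps_du F i j.+1 *+ j.+1 = ps_dv F i.+1 j *+ i.+1.
Proof. by rewrite /ps_du /ps_dv -!mulrnA mulnC. Qed.

End LowOrderCoefficients.

Lemma domega_at_center (K : fieldType) (P Q : {poly {poly K}}) ax ay :
  has_center P Q ax ay -> domega_at P Q ax ay = 0.
Proof.
case=> [[P0 Q0] [mu [F [mu0 [FuE FvE]]]]].
have := ps_du_dvC F 0 0; rewrite FuE FvE !mulr1n ps_mul01 ps_mul10.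
rewrite !ps_of_poly00 P0 Q0 !mulr0 !addr0 ps_of_poly01 ps_of_poly10.
move=> /(mulfI mu0) PyQx.
by rewrite /domega_at /eval2 !hornerD !hornerN -!/(eval2 _ ax ay) PyQx subrr.
Qed.

Theorem mainTheorem1 (K : closedFieldType) (P Q : {poly {poly K}}) (ax ay : K) :
  has_center P Q ax ay -> domega_at P Q ax ay = 0.
Proof. exact: domega_at_center. Qed.
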